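(* Let $n\ge 2$. To each line of play of Planted Brussels Sprouts of order $n$ associate a sequence of transpositions $(t_1,\dots,t_{n-1})$ in the symmetric group $S_n$ as follows. Suppose the $k$-th move joins free arms with short labels $i$ and $j$. Let $i'$ and $j'$ be the short labels of the free arms immediately counterclockwise from the arm $i$ and from the arm $j$, respectively, within the region in which the move is made. Set $t_k=(i'\ j')$. Then the following hold: (1) $t_{n-1}t_{n-2}\cdots t_1=(1\,2\,\cdots\,n)$, where permutations are composed from right to left, so $t_1$ is applied first; (2) distinct lines of play give distinct sequences; (3) every sequence of $n-1$ transpositions $(t_1,\dots,t_{n-1})$ with $t_{n-1}\cdots t_1=(1\,2\,\cdots\,n)$ arises from some line of play. Hence these sequences are exactly the $n^{n-2}$ factorizations of the cycle $(1\,2\,\cdots\,n)$ into $n-1$ transpositions.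
   Context: Planted Brussels Sprouts of order $n$: start with a closed disk with $n$ marked points on its boundary circle, labeled $1,\dots,n$ in clockwise order. Attached to each marked point is an arm, a short segment pointing into the interior of the disk; these arms are free. A move consists of two steps. First, choose two free arms and join their free ends by a simple curve (an arc) in the disk that does not intersect any previously drawn arc or arm; the two joined arms cease to be free. Second, mark a point (a notch) on the arc, from which two new free arms emanate, one on each side of the arc. The game ends when no move is possible. A line of play is the full sequence of moves. Two lines of play are the same iff for each $k$ the arms joined at the $k$-th move coincide. Arms are identified by long labels: the original arm $i$ has long label $i$, and when arms with long labels $\alpha,\beta$ are joined, the new arms have long labels $(\alpha,\beta)$ and $(\beta,\alpha)$. Short labels: the original arm at point $i$ has short label $i$. If an arc joins arms with short labels $i$ and $j$, the two new arms receive short labels $i$ and $j$, placed so that, going clockwise around the notch, one sees the old arm $i$, the new arm $i$, the old arm $j$, and the new arm $j$. Regions and subgames: at any stage, the drawn arcs divide the disk into regions. The free arms in a region form a subgame, and any move joins two free arms of the same region. Within a region, the free arms carry distinct short labels and have a cyclic (clockwise) order around the region. ''Immediately counterclockwise'' refers to the preceding free arm in this cyclic order. For example, the first move joining original arms $i$ and $j$ yields $t_1=(i-1\ \ j-1)$, with indices taken mod $n$ in $\{1,\dots,n\}$. *)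

From mathcomp Require Import all_boot all_fingroup.
Set Implicit Arguments. Unset Strict Implicit. Unset Printing Implicit Defensive.

(* Marked points 1..n are represented by the ordinals 0..n-1 of 'I_n
   (label k+1 <-> ordinal k). *)

(* Long labels of arms: [Orig i] is the original arm at point i;
   joining arms with long labels a, b creates arms [Join a b] = (a,b)
   and [Join b a] = (b,a). *)
Inductive arm (n : nat) : Type :=
| Orig of 'I_n
| Join of arm n & arm n.

Fixpoint short n (x : arm n) : 'I_n :=
  match x with
  | Orig i => i
  | Join a _ => short a
  end.

(* A region is the clockwise cyclic list of its free arms; a position is
   the list of all regions (their order in the list is irrelevant). *)
Definition region n := seq (arm n).
Definition position n := seq (region n).

Definition init_pos n : position n := [:: map (@Orig n) (enum 'I_n)].

(* [move s a b s' i' j'] : in position s, joining free arms a and b is a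
   legal move leading to position s'; i' (resp. j') is the short label of
   the free arm immediately counterclockwise from a (resp. b) in their
   region.  If the region reads clockwise  a, A, b, B  (cyclically), the
   arc splits it into the region  A, (a,b)  and the region  B, (b,a);
   the new arm (a,b) has short label i = short a and lies on the side of
   A, as forced by the clockwise convention old i, new i, old j, new j
   around the notch. *)
Definition move n (s : position n) (a b : arm n) (s' : position n)
    (i' j' : 'I_n) : Prop :=
  exists (pre post : position n) (r : region n) (k : nat) (A B : region n),
    [/\ s = pre ++ r :: post,
        rot k r = a :: A ++ b :: B,
        s' = pre ++ (rcons A (Join a b)) :: (rcons B (Join b a)) :: post,
        i' = short (last b B) &
        j' = short (last a A)].

Definition terminal n (s : position n) : Prop :=
  ~ exists a b s' i' j', @move n s a b s' i' j'.

Inductive play n : position n -> seq (arm n * arm n) -> seq {perm 'I_n} -> Prop :=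
| play_end s : terminal s -> play s [::] [::]
| play_move s a b s' i' j' ms ts :
    move s a b s' i' j' -> play s' ms ts ->
    play s ((a, b) :: ms) (tperm i' j' :: ts).

Definition same_move n (m1 m2 : arm n * arm n) : Prop :=
  m1 = m2 \/ m1 = (m2.2, m2.1).

Inductive same_line n : seq (arm n * arm n) -> seq (arm n * arm n) -> Prop :=
| same_nil : same_line [::] [::]
| same_cons m1 m2 l1 l2 :
    same_move m1 m2 -> same_line l1 l2 -> same_line (m1 :: l1) (m2 :: l2).

(* Right-to-left composition: for ts = [:: t_1; ...; t_k],
   rl_prod ts = t_k o ... o t_1 as a function (t_1 applied first).
   In mathcomp, (s * t) x = t (s x), so this is t_1 * t_2 * ... * t_k. *)
Definition rl_prod n (ts : seq {perm 'I_n}) : {perm 'I_n} :=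
  foldr (fun t acc => (t * acc)%g) 1%g ts.

Definition is_transposition n (t : {perm 'I_n}) : Prop :=
  exists x y : 'I_n, x != y /\ t = tperm x y.

Definition is_long_cycle n (p : {perm 'I_n}) : Prop :=
  forall x : 'I_n, p x = ordS x.

From HB Require Import structures.
From mathcomp Require Import all_boot all_fingroup.
From mathcomp Require Import zify.
Set Implicit Arguments. Unset Strict Implicit. Unset Printing Implicit Defensive.

(* Throughout a play the short labels of the free arms are 1, ..., n, each
   occurring once, and the labels of every region, read clockwise, form a
   cycle of one permutation σ; initially σ = (1 2 ... n).  A move joining the
   arms labelled i and j, whose counterclockwise neighbours are labelled i'
   and j' (so σ i' = i and σ j' = j), splits the cycle of its region into the
   two cycles of σ (i' j').  Each move thus adds a region and replaces σ by
   σ t_k; the game ends when every region has one arm, i.e. σ = 1, which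
   gives (1).  Since i = σ i' and j = σ j', the transposition (i' j')
   determines the move, which gives (2).  Conversely (x y) can be played
   whenever x and y lie in one cycle of σ.  This holds for the first factor
   of a factorization of σ into n - #regions transpositions: otherwise
   σ (x y) would have fewer cycles than σ, hence fewer than #regions, and the
   remaining transpositions, each changing the number of cycles by one, could
   not reach the n cycles of the identity; this gives (3). *)

Section ArmEqType.
Variable n : nat.

Fixpoint arm_eqb (x y : arm n) : bool :=
  match x, y with
  | Orig i, Orig j => i == j
  | Join a b, Join c d => arm_eqb a c && arm_eqb b d
  | _, _ => false
  end.

Lemma arm_eqP : Equality.axiom arm_eqb.
Proof.
elim=> [i|a IHa b IHb] [j|c d] /=; try by constructor.
  by apply: (iffP eqP) => [->|[]].
case: (IHa c) => [->|nac]; last by constructor => -[].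
by case: (IHb d) => [->|nbd]; constructor => // -[].
Qed.

HB.instance Definition _ := hasDecEq.Build (arm n) arm_eqP.

End ArmEqType.

Lemma uniq_map_inj_in (T1 T2 : eqType) (f : T1 -> T2) s :
  uniq (map f s) -> {in s &, injective f}.
Proof.
elim: s => [//|y s IH] /= /andP[fy_s uniq_fs] x z.
rewrite !inE => /predU1P[->|xs] /predU1P[->|zs] // e.
- by move: fy_s; rewrite e map_f.
- by move: fy_s; rewrite -e map_f.
- exact: IH.
Qed.

Lemma sub_in_fpath (T : eqType) (f g : T -> T) x p :
  {in belast x p, f =1 g} -> fpath f x p -> fpath g x p.
Proof.
elim: p x => [//|y p IH] x /= fg /andP[/eqP fx fp].
rewrite -fg ?mem_head // fx eqxx /=; apply: IH fp => z z_p.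
by apply: fg; rewrite inE z_p orbT.
Qed.

Lemma fcycle_last (T : eqType) (f : T -> T) x y p q :
  fcycle f (x :: p ++ y :: q) -> f (last x p) = y /\ f (last y q) = x.
Proof.
by rewrite /= rcons_cat cat_path /= rcons_path => /and4P[_ /eqP -> _ /eqP ->].
Qed.

Lemma fcycle_tperm_split (T : finType) (σ : {perm T}) x y p q :
  uniq (x :: p ++ y :: q) -> fcycle σ (x :: p ++ y :: q) ->
  fcycle (tperm (last y q) (last x p) * σ)%g (x :: p).
Proof.
move=> uniq_xpyq cyc; have [_ σq] := fcycle_last cyc.
move: uniq_xpyq; rewrite -cat_cons cat_uniq => /and3P[uniq_xp /hasPn disj _].
move: cyc; rewrite /= rcons_cat cat_path => /andP[fpath_p _].
rewrite /= rcons_path /= permM tpermR σq eqxx andbT.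
apply: sub_in_fpath fpath_p => z z_p; rewrite permM tpermD //.
  by apply: contraNneq (disj _ (mem_last y q)) => ->; apply: mem_belast z_p.
by move: uniq_xp; rewrite lastI rcons_uniq => /andP[+ _]; apply: contraNneq => ->.
Qed.

Lemma fcycle_tpermD (T : finType) (σ : {perm T}) x y p :
  x \notin p -> y \notin p -> fcycle σ p -> fcycle (tperm x y * σ)%g p.
Proof.
move=> x_p y_p; rewrite (@eq_in_cycle _ (mem p) _ (frel σ)) ?allss // => u v u_p _.
by rewrite /= permM tpermD // eq_sym; [exact: (memPn x_p) | exact: (memPn y_p)].
Qed.

Lemma porbit_fconnect (T : finType) (σ : {perm T}) x y :
  (y \in porbit σ x) = fconnect σ x y.
Proof.
apply/porbitP/idP => [[i ->]|]; first by rewrite permX fconnect_iter.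
by rewrite fconnect_orbit => /trajectP[i _ ->]; exists i; rewrite permX.
Qed.

Lemma porbit_fcycle (T : finType) (σ : {perm T}) p x :
  fcycle σ p -> x \in p -> porbit σ x =i p.
Proof. by move=> cyc x_p y; rewrite porbit_fconnect (fconnect_cycle cyc x_p). Qed.

Lemma card_porbits1 (T : finType) : #|porbits (1 : {perm T})| = #|T|.
Proof.
rewrite card_imset // => x y /eqP; rewrite eq_porbit_mem.
by case/porbitP => i ->; rewrite expg1n perm1.
Qed.

Lemma tperm_pair_eq (T : finType) (x y u v : T) : x != y -> tperm x y = tperm u v ->
  (u, v) = (x, y) \/ (u, v) = (y, x).
Proof.
move=> nxy /(congr1 (fun t : {perm T} => t x)).
rewrite tpermL; case: tpermP => [-> ->|-> ->|_ _ eyx]; [by left|by right|].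
by rewrite eyx eqxx in nxy.
Qed.

Section Position.
Variable n : nat.
Implicit Types (s : position n) (r : region n) (σ : {perm 'I_n}) (α : 'I_n -> arm n).

Definition labels s : seq 'I_n := map (@short n) (flatten s).

Definition wf_position s σ α :=
  [/\ perm_eq (labels s) (enum 'I_n),
      {in s, forall r, (r != [::]) && fcycle σ (map (@short n) r)} &
      {in flatten s, forall x, α (short x) = x}].

Lemma labels_cons r s : labels (r :: s) = map (@short n) r ++ labels s.
Proof. exact: map_cat. Qed.

Lemma uniq_labels s σ α : wf_position s σ α -> uniq (labels s).
Proof. by case=> /perm_uniq -> _ _; apply: enum_uniq. Qed.

Lemma mem_labels s σ α x : wf_position s σ α -> x \in labels s.
Proof. by case=> /perm_mem -> _ _; apply: mem_enum. Qed.

Lemma size_flatten_wf s σ α : wf_position s σ α -> size (flatten s) = n.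
Proof. by case=> /perm_size; rewrite size_map size_enum_ord. Qed.

Lemma wf_position_perm s1 s2 σ α :
  perm_eq s1 s2 -> wf_position s1 σ α -> wf_position s2 σ α.
Proof.
move=> eq_s [perm_s cyc_s arm_s]; have eq_f := perm_flatten eq_s.
split=> [|r|x]; rewrite -?(perm_mem eq_s) -?(perm_mem eq_f);
  [|exact: cyc_s|exact: arm_s].
by apply: perm_trans perm_s; rewrite perm_sym; apply: perm_map.
Qed.

Lemma wf_position_rot k r s σ α :
  wf_position (r :: s) σ α -> wf_position (rot k r :: s) σ α.
Proof.
case=> perm_s cyc_s arm_s; split=> [|r'|x].
- by apply: perm_trans perm_s; rewrite !labels_cons perm_cat2r map_rot perm_rot.
- rewrite inE => /predU1P[->|r'_s]; last by apply: cyc_s; rewrite inE r'_s orbT.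
  have /andP[r0 cyc] := cyc_s r (mem_head _ _).
  by rewrite map_rot rot_cycle cyc andbT -size_eq0 size_rot size_eq0.
- by rewrite /= mem_cat mem_rot -mem_cat; apply: arm_s.
Qed.

Lemma wf_position_eq s σ α β :
  α =1 β -> wf_position s σ α -> wf_position s σ β.
Proof. by move=> eq_αβ [? ? arm_s]; split=> // x x_s; rewrite -eq_αβ arm_s. Qed.

Lemma wf_position_arms a b A B s σ α :
  wf_position ((a :: A ++ b :: B) :: s) σ α ->
  [/\ σ (short (last b B)) = short a, σ (short (last a A)) = short b,
      short a != short b, α (short a) = a & α (short b) = b].
Proof.
move=> wf; have := uniq_labels wf; rewrite labels_cons cat_uniq => /andP[+ _].
rewrite /= map_cat mem_cat inE !negb_or => /andP[/andP[_ /andP[ab _]] _].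
case: wf => _ cyc_s arm_s; have /andP[_] := cyc_s _ (mem_head _ s).
rewrite /= map_cat => /fcycle_last; rewrite !last_map => -[-> ->].
by split=> //; apply: arm_s; rewrite /= !(mem_cat, inE) eqxx ?orbT.
Qed.

Lemma labels_split a b A B s :
  perm_eq (labels (rcons A (Join a b) :: rcons B (Join b a) :: s))
          (labels ((a :: A ++ b :: B) :: s)).
Proof.
rewrite !labels_cons catA perm_cat2r !map_rcons /= map_cat -cat_cons.
by apply: perm_cat; rewrite perm_rcons.
Qed.

Lemma relabel_split a b A B s α :
  uniq (labels (rcons A (Join a b) :: rcons B (Join b a) :: s)) ->
  {in flatten ((a :: A ++ b :: B) :: s), forall x, α (short x) = x} ->
  {in flatten (rcons A (Join a b) :: rcons B (Join b a) :: s), forall x,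
    [eta α with short a |-> Join a b, short b |-> Join b a] (short x) = x}.
Proof.
set s' := rcons A _ :: _ => /uniq_map_inj_in inj arm_s x x_s' /=.
have ab_s' : Join a b \in flatten s'.
  by rewrite /= !(mem_cat, mem_rcons, inE) eqxx.
have ba_s' : Join b a \in flatten s'.
  by rewrite /= !(mem_cat, mem_rcons, inE) eqxx !orbT.
case: eqP => [xa|/eqP xa]; first exact: inj.
case: eqP => [xb|/eqP xb]; first exact: inj.
have /negPf x_ab : x != Join a b by apply: contraNneq xa => ->.
have /negPf x_ba : x != Join b a by apply: contraNneq xb => ->.
apply: arm_s; move: x_s'; rewrite !(mem_cat, mem_rcons, inE) x_ab x_ba.
by case/or3P => [/orP[]|/orP[]|] // ->; rewrite ?orbT.
Qed.

Lemma wf_position_split a b A B s σ α :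
  wf_position ((a :: A ++ b :: B) :: s) σ α ->
  wf_position (rcons A (Join a b) :: rcons B (Join b a) :: s)
    (tperm (short (last b B)) (short (last a A)) * σ)%g
    [eta α with short a |-> Join a b, short b |-> Join b a].
Proof.
move=> wf; have := uniq_labels wf; case: wf => perm_s cyc_s arm_s.
have /andP[_ cyc_r] := cyc_s _ (mem_head _ s).
rewrite -!(last_map (@short n)) labels_cons.
set s' := rcons A _ :: _.
set i := short a; set j := short b; set LA := map _ A; set LB := map _ B.
have labels_r : map (@short n) (a :: A ++ b :: B) = i :: LA ++ j :: LB.
  by rewrite /= map_cat.
rewrite labels_r in cyc_r *.
rewrite cat_uniq => /and3P[uniq_r /hasPn disj _].
have perm_s' : perm_eq (labels s') (enum 'I_n).
  exact: perm_trans (labels_split a b A B s) perm_s.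
split=> // [r|].
- rewrite !inE => /or3P[/eqP->|/eqP->|r_s].
  + rewrite -size_eq0 size_rcons map_rcons -(rotr_cycle 1) rotr1_rcons /=.
    exact: fcycle_tperm_split.
  + rewrite -size_eq0 size_rcons map_rcons -(rotr_cycle 1) rotr1_rcons /= tpermC.
    apply: fcycle_tperm_split; first by rewrite -cat_cons uniq_catC.
    by rewrite -(rot_cycle (size (i :: LA))) -cat_cons rot_size_cat in cyc_r.
  + have /andP[-> cyc] : (r != [::]) && fcycle σ (map (@short n) r).
      by apply: cyc_s; rewrite inE r_s orbT.
    have r_region : {subset map (@short n) r <= labels s}.
      by move=> _ /mapP[y y_r ->]; apply/map_f/flattenP; exists r.
    by apply: fcycle_tpermD cyc; apply/negP => /r_region/disj/negP; apply;
      rewrite -cat_cons mem_cat mem_last ?orbT.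
- by apply: relabel_split arm_s; rewrite (perm_uniq perm_s') enum_uniq.
Qed.

Lemma size_move s a b s' i j : move s a b s' i j -> size s' = (size s).+1.
Proof.
by case=> [pre [post [r [k [A [B [-> _ -> _ _]]]]]]]; rewrite !size_cat /= addnS.
Qed.

Lemma wf_position_focus pre r post k σ α :
  wf_position (pre ++ r :: post) σ α -> wf_position (rot k r :: pre ++ post) σ α.
Proof.
move=> wf; apply: wf_position_rot; apply: wf_position_perm wf.
by apply/permPl; apply: (perm_catCA pre [:: r] post).
Qed.

Lemma move_arms s a b s' i j σ α : wf_position s σ α -> move s a b s' i j ->
  [/\ σ i = short a, σ j = short b, short a != short b,
      α (short a) = a & α (short b) = b].
Proof.
move=> wf [pre [post [r [k [A [B [es er _ -> ->]]]]]]].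
by move: wf; rewrite es => /(wf_position_focus k); rewrite er => /wf_position_arms.
Qed.

Lemma wf_position_move s a b s' i j σ α :
  wf_position s σ α -> move s a b s' i j ->
  wf_position s' (tperm i j * σ)%g
    [eta α with short a |-> Join a b, short b |-> Join b a].
Proof.
move=> wf [pre [post [r [k [A [B [es er -> -> ->]]]]]]].
move: wf; rewrite es => /(wf_position_focus k); rewrite er => /wf_position_split.
apply: wf_position_perm; apply/permPl.
exact: (perm_catCA [:: rcons A (Join a b); rcons B (Join b a)] pre post).
Qed.

Lemma size_wf_position s σ α : wf_position s σ α -> size s <= n.
Proof.
move=> wf; rewrite -[X in _ <= X](size_flatten_wf wf) size_flatten.
case: wf => _ + _.
elim: s => [//|r s IH] cyc_s /=; rewrite -add1n leq_add //.
  by have /andP[+ _] := cyc_s r (mem_head _ _); rewrite lt0n size_eq0.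
by apply: IH => r' r'_s; apply: cyc_s; rewrite inE r'_s orbT.
Qed.

Lemma terminal_singletons s σ α : wf_position s σ α -> terminal s ->
  {in s, forall r, size r = 1}.
Proof.
case=> _ cyc_s _ term r r_s; have /andP[+ _] := cyc_s r r_s.
case: r r_s => [|a [|b B]] // r_s _; case: term; case/splitPr: r_s => pre post.
exists a, b, (pre ++ [:: Join a b] :: rcons B (Join b a) :: post).
exists (short (last b B)), (short a).
by exists pre, post, [:: a, b & B], 0, [::], B; rewrite rot0.
Qed.

Lemma wf_position_singletons s σ α : wf_position s σ α ->
  {in s, forall r, size r = 1} -> size s = n /\ σ = 1%g.
Proof.
move=> wf s1; split.
  rewrite -[RHS](size_flatten_wf wf) size_flatten.
  have /all_pred1P -> : all (pred1 1) (shape s).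
    by apply/allP => _ /mapP[r r_s ->]; rewrite /= s1.
  by rewrite sumn_nseq size_map mul1n.
apply/permP => x; rewrite perm1.
have /mapP[y /flattenP[r r_s y_r] ->] := mem_labels x wf.
case: wf => _ /(_ r r_s)/andP[_]; have := s1 r r_s.
case: r r_s y_r => [//|z [|//]] _; rewrite inE => /eqP -> _ /=.
by rewrite andbT => /eqP.
Qed.

Lemma rl_prod_cons (t : {perm 'I_n}) ts : rl_prod (t :: ts) = (t * rl_prod ts)%g.
Proof. by []. Qed.

Lemma play_nilE s ms : play s ms [::] -> ms = [::].
Proof. by move E : [::] => ts P; case: P E. Qed.

Lemma play_consE s ms t ts : play s ms (t :: ts) ->
  exists a b s' i j ms', [/\ ms = (a, b) :: ms', t = tperm i j,
                           move s a b s' i j & play s' ms' ts].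
Proof.
move E : (t :: ts) => ts0 P; case: P E => // {}s a b s' i j ms' ts' M P [-> ->].
by exists a, b, s', i, j, ms'.
Qed.

Lemma play_size_prod s ms ts σ α : wf_position s σ α -> play s ms ts ->
  size ts + size s = n /\ rl_prod ts = σ.
Proof.
move=> + P; elim: P σ α => {s ms ts} [s term | s a b s' i j ms ts M _ IH] σ α wf.
  by have [-> ->] := wf_position_singletons wf (terminal_singletons wf term).
have [size_ts prod_ts] := IH _ _ (wf_position_move wf M).
split; first by rewrite (size_move M) addnS in size_ts.
by rewrite rl_prod_cons prod_ts mulgA tperm2 mul1g.
Qed.

Lemma play_same_line s1 ms1 ts σ α : wf_position s1 σ α -> play s1 ms1 ts ->
  forall s2 ms2, wf_position s2 σ α -> play s2 ms2 ts -> same_line ms1 ms2.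
Proof.
move=> + P1; elim: P1 σ α => {s1 ms1 ts} [s1 _ | s1 a b s1' i j ms1 ts M1 _ IH]
  σ α wf1 s2 ms2 wf2 P2; first by rewrite (play_nilE P2); constructor.
have [c [d [s2' [i2 [j2 [ms2' [-> eq_t M2 P2']]]]]]] := play_consE P2.
(* A move is determined by its transposition (i j): it joins α (σ i) and α (σ j). *)
have [σi σj ab αa αb] := move_arms wf1 M1.
have [σi2 σj2 _ αc αd] := move_arms wf2 M2.
have wf1' := wf_position_move wf1 M1; have wf2' := wf_position_move wf2 M2.
have ij : i != j by apply: contraNneq ab => eq_ij; rewrite -σi -σj eq_ij.
have [[? ?]|[? ?]] := tperm_pair_eq ij eq_t; subst i2 j2.
  have ? : c = a by rewrite -αc -σi2 σi αa.
  have ? : d = b by rewrite -αd -σj2 σj αb.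
  subst c d; constructor; [by left | exact: IH _ _ wf1' _ _ wf2' P2'].
have ? : c = b by rewrite -αc -σi2 σj αb.
have ? : d = a by rewrite -αd -σj2 σi αa.
subst c d; constructor; [by right | apply: IH _ _ wf1' _ _ _ P2'].
rewrite tpermC; apply: wf_position_eq wf2' => x /=.
by case: eqP => [->|]; rewrite ?(negPf ab) // eq_sym (negPf ab).
Qed.

Lemma card_porbits_rl_prod (ts : seq {perm 'I_n}) :
  {in ts, forall t, is_transposition t} -> n <= #|porbits (rl_prod ts)| + size ts.
Proof.
elim: ts => [|t ts IH] tr_ts; first by rewrite card_porbits1 card_ord addn0.
have [x [y [xy ->]]] := tr_ts t (mem_head _ _).
have := porbits_mul_tperm (rl_prod ts) x y; rewrite xy rl_prod_cons /=.
have : n <= #|porbits (rl_prod ts)| + size ts.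
  by apply: IH => u u_ts; apply: tr_ts; rewrite inE u_ts orbT.
(* [set] merges copies of one atom differing only in inferred instances,
   which [lia] would otherwise treat as unrelated. *)
case: (x \in _); rewrite /= -addnn; set c := #|porbits (_ * _)%g|; lia.
Qed.

Lemma card_porbits_wf s σ α : wf_position s σ α -> #|porbits σ| <= size s.
Proof.
move=> wf; have [_ cyc_s _] := wf.
pose head_porbit r := if r is z :: _ then porbit σ (short z) else set0.
rewrite -(size_map head_porbit); apply: leq_trans (card_size _).
apply/subset_leq_card/subsetP => _ /imsetP[x _ ->].
have /mapP[y /flattenP[r r_s y_r] ->] := mem_labels x wf.
apply/mapP; exists r => //; case: r r_s y_r => [//|z r] r_s y_r /=.
have /andP[_ cyc] := cyc_s _ r_s.
by apply/eqP; rewrite eq_porbit_mem (porbit_fcycle cyc) ?mem_head ?map_f.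
Qed.

Lemma terminal_full s σ α : wf_position s σ α -> size s = n -> terminal s.
Proof.
move=> wf size_s [a [b [s' [i [j M]]]]].
have := size_wf_position (wf_position_move wf M).
by rewrite (size_move M) size_s ltnn.
Qed.

Lemma exists_move_tperm s σ α x y :
  wf_position s σ α -> x != y -> x \in porbit σ y ->
  exists a b s', move s a b s' x y.
Proof.
move=> wf xy x_y; have [_ cyc_s arm_s] := wf.
have /mapP[z /flattenP[r r_s z_r] yz] := mem_labels y wf.
have /andP[_ cyc] := cyc_s r r_s.
have y_r : y \in map (@short n) r by rewrite yz map_f.
have x_r : x \in map (@short n) r by rewrite -(porbit_fcycle cyc y_r).
have arm_r w : w \in map (@short n) r -> α w \in r /\ short (α w) = w.
  by case/mapP=> v v_r ->; rewrite arm_s //; apply/flattenP; exists r.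
have [a_r σxa] := arm_r _ (mem_fcycle cyc x_r).
have [b_r σyb] := arm_r _ (mem_fcycle cyc y_r).
set a := α (σ x) in a_r σxa; set b := α (σ y) in b_r σyb.
have ab : a != b.
  apply: contraNneq xy => eq_ab; apply/eqP/(@perm_inj _ σ).
  by rewrite -σxa -σyb eq_ab.
have [k r1 er] := rot_to a_r.
have : b \in a :: r1 by rewrite -er mem_rot.
rewrite inE eq_sym (negPf ab) /= => b_r1; case/splitPr: b_r1 er => A B er.
have [pre [post es]] : exists pre post, s = pre ++ r :: post.
  by case/splitPr: r_s => pre post; exists pre, post.
pose s' := pre ++ rcons A (Join a b) :: rcons B (Join b a) :: post.
have M : move s a b s' (short (last b B)) (short (last a A)).
  by exists pre, post, r, k, A, B.
have [σx σy _ _ _] := move_arms wf M.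
have -> : x = short (last b B) by apply: (@perm_inj _ σ); rewrite σx σxa.
have -> : y = short (last a A) by apply: (@perm_inj _ σ); rewrite σy σyb.
by exists a, b, s'.
Qed.

Lemma porbit_first_factor s σ α x y ts : wf_position s σ α -> x != y ->
  {in ts, forall t, is_transposition t} -> (size ts).+1 + size s = n ->
  rl_prod ts = (tperm x y * σ)%g -> x \in porbit σ y.
Proof.
move=> wf xy tr_ts size_s prod_ts; apply/negPn/negP => x_y.
have := porbits_mul_tperm σ x y; rewrite x_y xy /= -addnn.
have := card_porbits_rl_prod tr_ts; rewrite prod_ts.
have := card_porbits_wf wf; move: size_s.
set c := #|porbits σ|; set c' := #|porbits _|; set k := size ts; lia.
Qed.

Lemma play_exists ts s σ α : wf_position s σ α ->
  {in ts, forall t, is_transposition t} ->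
  size ts + size s = n -> rl_prod ts = σ -> exists ms, play s ms ts.
Proof.
elim: ts s σ α => [|t ts IH] s σ α wf tr_ts size_s prod_ts.
  by exists [::]; apply/play_end/(terminal_full wf).
have [x [y [xy et]]] := tr_ts t (mem_head _ _).
have tr_ts' : {in ts, forall u, is_transposition u}.
  by move=> u u_ts; apply: tr_ts; rewrite inE u_ts orbT.
have prod_ts' : rl_prod ts = (tperm x y * σ)%g.
  by rewrite -prod_ts rl_prod_cons et mulgA tperm2 mul1g.
have x_y := porbit_first_factor wf xy tr_ts' size_s prod_ts'.
have [a [b [s' M]]] := exists_move_tperm wf xy x_y.
have [|ms P] := IH _ _ _ (wf_position_move wf M) tr_ts' _ prod_ts'.
  by rewrite (size_move M) addnS.
by exists ((a, b) :: ms); rewrite et; apply: play_move M P.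
Qed.

End Position.

Lemma val_iter_ordS m k : val (iter k (@ordS m.+1) ord0) = k %% m.+1.
Proof. by elim: k => [|k /= ->]; rewrite ?mod0n // -addn1 modnDml addn1. Qed.

Lemma fcycle_ordS m : fcycle (@ordS m.+1) (enum 'I_m.+1).
Proof.
have -> : enum 'I_m.+1 = traject (@ordS m.+1) ord0 m.+1.
  apply: (@eq_from_nth _ ord0); first by rewrite size_enum_ord size_traject.
  move=> i; rewrite size_enum_ord => lt_i; apply: val_inj.
  by rewrite nth_traject // val_iter_ordS /= nth_enum_ord // modn_small.
rewrite /= rcons_path fpath_traject /= last_traject -iterS.
by apply/eqP/val_inj; rewrite val_iter_ordS modnn.
Qed.

Lemma wf_position_init m :
  wf_position (init_pos m.+1) (perm (@ordS_inj m.+1)) (@Orig m.+1).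
Proof.
have labels_init : labels (init_pos m.+1) = enum 'I_m.+1.
  by rewrite /labels /init_pos /= cats0 -map_comp map_id.
split=> [|r|x]; first by rewrite labels_init.
  rewrite inE => /eqP ->; rewrite -size_eq0 size_map size_enum_ord /=.
  rewrite -map_comp map_id (eq_cycle (e' := frel (@ordS m.+1))) ?fcycle_ordS //.
  by move=> u v /=; rewrite permE.
by rewrite /init_pos /= cats0 => /mapP[i _ ->].
Qed.

Theorem theorem5 (n : nat) (hn : 2 <= n) :
  (forall ms ts, play (init_pos n) ms ts ->
     size ts = n.-1 /\ is_long_cycle (rl_prod ts))
  /\ (forall ms1 ms2 ts, play (init_pos n) ms1 ts -> play (init_pos n) ms2 ts ->
        same_line ms1 ms2)
  /\ (forall ts : seq {perm 'I_n},
        size ts = n.-1 -> (forall t, t \in ts -> is_transposition t) ->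
        is_long_cycle (rl_prod ts) ->
        exists ms, play (init_pos n) ms ts).
Proof.
case: n hn => [//|m] _; have wf0 := wf_position_init m.
split; [|split].
- move=> ms ts /(play_size_prod wf0) [size_ts ->]; split=> [|x].
    by move: size_ts; rewrite addn1 => -[].
  by rewrite permE.
- by move=> ms1 ms2 ts P1 /(play_same_line wf0 P1 wf0).
- move=> ts size_ts tr_ts long_ts; apply: (play_exists wf0 tr_ts).
    by rewrite size_ts addn1.
  by apply/permP => x; rewrite long_ts permE.
Qed.
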